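(* Fix a feature dimension $d$ and a finite label set $\mathcal{Y}$. There exist functions $f^{(1)}_{\text{agg}}, f^{(2)}_{\text{agg}}, \ldots$ and $f_{\text{pred}}$ such that the following holds. For every $\varepsilon > 0$, every connected graph $G = (V, E, \boldsymbol{X})$ with node features $\boldsymbol{X} \in \mathbb{R}^{n \times d}$, every nonempty set of labeled nodes $V_{\text{train}} \subset V$ with labels $\boldsymbol{Y}_{\text{train}} \in \mathcal{Y}^{V_{\text{train}}}$, and every test node $v \in V \setminus V_{\text{train}}$, there exists $L \in \mathbb{Z}_+$ such that for every $l \ge L$ the message passing GNN $(f^{(1)}_{\text{agg}}, \ldots, f^{(l)}_{\text{agg}}, f_{\text{pred}})$ with labels as features (LaF) outputs $\hat{\boldsymbol{y}}_v$ satisfying $$\left\| \hat{\boldsymbol{y}}_v - \hat{\boldsymbol{y}}^{\text{LP}}_{v} \right\|_1 \le \varepsilon,$$ where $\hat{\boldsymbol{y}}^{\text{LP}}_{v}$ is the output of label propagation at $v$.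
   Context: A graph is $G=(V,E,\boldsymbol{X})$ with nodes $V=\{1,\dots,n\}$, edge set $E$ (undirected), node features $\boldsymbol{X}=[\boldsymbol{x}_1,\dots,\boldsymbol{x}_n]^\top\in\mathbb{R}^{n\times d}$; $\mathcal{N}(v)$ is the set of neighbors of $v$ and $\deg(v)=|\mathcal{N}(v)|$. For a label $c \in \mathcal{Y}$, $\boldsymbol{y}_v\in\mathbb{R}^{\mathcal{Y}}$ denotes the one-hot encoding of the label of a labeled node $v$. A message passing GNN $(f^{(1)}_{\text{agg}},\dots,f^{(l)}_{\text{agg}},f_{\text{pred}})$ computes $\boldsymbol{h}^{(k)}_v = f^{(k)}_{\text{agg}}(\boldsymbol{h}^{(k-1)}_v, \{\!\{\boldsymbol{h}^{(k-1)}_u : u\in\mathcal{N}(v)\}\!\})$ for $k=1,\dots,l$ and all $v\in V$ (the second argument is a multiset), and outputs $\hat{\boldsymbol{y}}_v=f_{\text{pred}}(\boldsymbol{h}^{(l)}_v)$. With labels as features (LaF), the initialization is $\boldsymbol{h}^{(0)}_v=[\boldsymbol{x}_v;\tilde{\boldsymbol{y}}_v]\in\mathbb{R}^{d+1+|\mathcal{Y}|}$, where $\tilde{\boldsymbol{y}}_v=[1;\boldsymbol{y}_v]$ if $v\in V_{\text{train}}$ and $\tilde{\boldsymbol{y}}_v=\mathbf{0}_{1+|\mathcal{Y}|}$ otherwise ($[\cdot;\cdot]$ is concatenation). Label propagation: for a test node $v$, run a simple random walk from $v$ (each step moves to a uniformly random neighbor of the current node); $\hat{\boldsymbol{y}}^{\text{LP}}_{v}\in\mathbb{R}^{\mathcal{Y}}$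 has $i$-th entry equal to the probability that the first node of $V_{\text{train}}$ hit by the walk has label $i$. *)

From HB Require Import structures.
From mathcomp Require Import all_boot all_order all_algebra.
From mathcomp Require Import all_classical all_reals all_analysis.
Set Implicit Arguments. Unset Strict Implicit. Unset Printing Implicit Defensive.
Import Order.TTheory GRing.Theory Num.Theory.
Import numFieldNormedType.Exports.
Local Open Scope ring_scope.

Section GNN.
Variables (R : realType) (d : nat) (Y : finType).

Definition simple_graph n (e : rel 'I_n) : Prop :=
  (forall u w, e u w = e w u) /\ (forall u, ~~ e u u).

Definition connected_graph n (e : rel 'I_n) : Prop :=
  forall u w, connect e u w.

Definition nbrs n (e : rel 'I_n) (u : 'I_n) : seq 'I_n :=
  [seq w <- enum 'I_n | e u w].

Definition deg n (e : rel 'I_n) (u : 'I_n) : nat := #|[set w | e u w]|.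

Definition onehot (c : Y) : 'rV[R]_#|Y| :=
  \row_(i < #|Y|) (enum_val i == c)%:R.

Definition ytilde n (Vtr : {set 'I_n}) (lab : 'I_n -> Y) (u : 'I_n)
  : 'rV[R]_(1 + #|Y|) :=
  if u \in Vtr then row_mx (1 : 'rV[R]_1) (onehot (lab u)) else 0.

Definition h0 n (X : 'M[R]_(n, d)) (Vtr : {set 'I_n}) (lab : 'I_n -> Y)
  (u : 'I_n) : 'rV[R]_(d + (1 + #|Y|)) :=
  row_mx (row u X) (ytilde Vtr lab u).

(* Layer 1: f1 maps R^(d+1+|Y|) states to R^m states; layers k >= 2 use
   fagg k on R^m states.  The multiset of neighbour states is passed as a
   sequence; the aggregation functions are required (in the theorem) to be
   invariant under permutation of that sequence, i.e. to be functions of the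
   multiset. *)
Definition perm_invariant (A B : Type) (T : eqType) (f : A -> seq T -> B) :=
  forall a s s', perm_eq s s' -> f a s = f a s'.

(* hidden j u = h^(j+1)_u *)
Fixpoint hidden m
  (f1 : 'rV[R]_(d + (1 + #|Y|)) -> seq 'rV[R]_(d + (1 + #|Y|)) -> 'rV[R]_m)
  (fagg : nat -> 'rV[R]_m -> seq 'rV[R]_m -> 'rV[R]_m)
  n (e : rel 'I_n) (X : 'M[R]_(n, d)) (Vtr : {set 'I_n}) (lab : 'I_n -> Y)
  (j : nat) (u : 'I_n) : 'rV[R]_m :=
  match j with
  | 0 => f1 (h0 X Vtr lab u) [seq h0 X Vtr lab w | w <- nbrs e u]
  | j'.+1 => fagg j.+1 (hidden f1 fagg e X Vtr lab j' u)
                [seq hidden f1 fagg e X Vtr lab j' w | w <- nbrs e u]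
  end.

Definition gnn_out m f1 fagg (fpred : 'rV[R]_m -> 'rV[R]_#|Y|)
  n e X Vtr lab (l : nat) (v : 'I_n) : 'rV[R]_#|Y| :=
  fpred (@hidden m f1 fagg n e X Vtr lab l.-1 v).

(* hitprob t u c = probability that the simple random walk started at u
   hits V_train within t steps and that the first node of V_train it hits
   has label c (computed by conditioning on the first step). *)
Fixpoint hitprob n (e : rel 'I_n) (Vtr : {set 'I_n}) (lab : 'I_n -> Y)
  (t : nat) (u : 'I_n) (c : Y) : R :=
  if u \in Vtr then (lab u == c)%:R
  else match t with
       | 0 => 0
       | t'.+1 => (deg e u)%:R^-1 *
                  \sum_(w <- nbrs e u) hitprob e Vtr lab t' w c
       end.

(* Label propagation: probability that the first node of V_train hit by the
   walk has label c = limit of the (nondecreasing) finite-horizon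
   probabilities. *)
Definition lp n (e : rel 'I_n) (Vtr : {set 'I_n}) (lab : 'I_n -> Y)
  (v : 'I_n) (c : Y) : R :=
  limn (fun t => hitprob e Vtr lab t v c).

End GNN.

(* A GNN whose hidden state carries a training flag and a label distribution can
   run label propagation exactly: after j + 1 layers an unlabeled node holds the
   probabilities that the random walk started there first hits V_train, within j
   steps, at a node of each label.  These finite-horizon hitting probabilities
   are nondecreasing and bounded by 1, hence converge to the label propagation
   output, so all #|Y| coordinates are eventually eps-close at once. *)
From HB Require Import structures.
From mathcomp Require Import all_boot all_order all_algebra.
From mathcomp Require Import all_classical all_reals all_analysis.
Import Order.TTheory GRing.Theory Num.Theory.
Import numFieldNormedType.Exports.
Local Open Scope classical_set_scope.
Local Open Scope ring_scope.

Lemma size_nbrs n (e : rel 'I_n) (u : 'I_n) : size (nbrs e u) = deg e u.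
Proof.
rewrite /deg /nbrs cardsE cardE /enum_mem -filter_predI.
by congr size; apply: eq_filter => w; rewrite /= andbT.
Qed.

Lemma cvg_sum_dist0 (R : realType) (T : Type) (F : set_system T) (I : finType)
    (u : I -> T -> R) (a : I -> R) :
  Filter F -> (forall i, u i t @[t --> F] --> a i) ->
  \sum_i `|u i t - a i| @[t --> F] --> 0.
Proof.
move=> FF cvg_u.
have cvg_dist i : `|u i t - a i| @[t --> F] --> `|a i - a i|.
  by apply: cvg_norm; apply: cvgB => //; exact: cvg_cst.
have := cvg_big (x0 := 0) (P := predT) (r := index_enum I) add_continuous FF
  (fun i _ => cvg_dist i).
by rewrite big1 // => i _; rewrite subrr normr0.
Qed.

Section HittingProbabilities.
Variables (R : realType) (Y : finType) (n : nat) (e : rel 'I_n).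
Variables (Vtr : {set 'I_n}) (lab : 'I_n -> Y).

Lemma hitprob_ge0 t u c : 0 <= hitprob R e Vtr lab t u c.
Proof.
elim: t u => [|t IH] u /=; case: ifP => _; rewrite ?ler0n ?lexx //.
by rewrite mulr_ge0 ?invr_ge0 ?ler0n ?sumr_ge0.
Qed.

Lemma hitprob_le1 t u c : hitprob R e Vtr lab t u c <= 1.
Proof.
elim: t u => [|t IH] u /=; case: ifP => _; rewrite ?lern1 ?leq_b1 ?ler01 //.
rewrite -size_nbrs; have [->|deg_gt0] := posnP (size (nbrs e u)).
  by rewrite invr0 mul0r ler01.
rewrite ler_pdivrMl ?ltr0n // mulr1 -sum1_size natr_sum.
exact: ler_sum.
Qed.

Lemma hitprob_nondecreasing u c :
  nondecreasing_seq (fun t => hitprob R e Vtr lab t u c).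
Proof.
apply/nondecreasing_seqP => t; elim: t u => [|t IH] u.
  by rewrite [X in X <= _]/=; case: ifP => [uV|_]; rewrite ?hitprob_ge0 //= uV.
rewrite [X in X <= _]/= [X in _ <= X]/=; case: ifP => // _.
by rewrite ler_wpM2l ?invr_ge0 ?ler0n // ler_sum.
Qed.

Lemma hitprob_cvg u c :
  (fun t => hitprob R e Vtr lab t u c) @ \oo --> lp R e Vtr lab u c.
Proof.
apply: nondecreasing_is_cvgn; first exact: hitprob_nondecreasing.
by exists 1 => _ [t _ <-]; exact: hitprob_le1.
Qed.

End HittingProbabilities.

Section LabelPropagationGNN.
Variables (R : realType) (d : nat) (Y : finType).

(* Hidden states [flag; distribution] in R^(1 + |Y|); the initial layer simply
   forgets the node features, since [flag; distribution] = tilde y_v. *)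
Definition lp_init (h : 'rV[R]_(d + (1 + #|Y|))) (_ : seq 'rV[R]_(d + (1 + #|Y|)))
  : 'rV[R]_(1 + #|Y|) := rsubmx h.

Definition lp_step (_ : nat) (h : 'rV[R]_(1 + #|Y|)) (s : seq 'rV[R]_(1 + #|Y|))
  : 'rV[R]_(1 + #|Y|) :=
  if lsubmx h == 0 then row_mx 0 ((size s)%:R^-1 *: \sum_(g <- s) rsubmx g) else h.

Definition lp_readout (h : 'rV[R]_(1 + #|Y|)) : 'rV[R]_#|Y| := rsubmx h.

Lemma lp_init_perm_invariant : perm_invariant lp_init.
Proof. by []. Qed.

Lemma lp_step_perm_invariant k : perm_invariant (lp_step k).
Proof. by move=> h s s' ss'; rewrite /lp_step (perm_size ss') (perm_big _ ss'). Qed.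

Lemma hidden_lp n (e : rel 'I_n) (X : 'M[R]_(n, d)) (Vtr : {set 'I_n})
    (lab : 'I_n -> Y) j u :
  hidden lp_init lp_step e X Vtr lab j u =
  row_mx (if u \in Vtr then 1 else 0) (\row_i hitprob R e Vtr lab j u (enum_val i)).
Proof.
elim: j u => [|j IH] u /=.
  rewrite /lp_init /h0 row_mxKr /ytilde; case: ifP => uV.
    by congr row_mx; apply/rowP => i; rewrite !mxE eq_sym.
  by rewrite -row_mx0; congr row_mx; apply/rowP => i; rewrite !mxE.
rewrite /lp_step IH row_mxKl; case uV: (u \in Vtr).
  rewrite oner_eq0; congr row_mx; apply/rowP => i.
  by rewrite !mxE; case: j {IH} => [|j] /=; rewrite uV.
rewrite eqxx; congr row_mx; apply/rowP => i.
rewrite !mxE /= size_map size_nbrs summxE big_map; congr (_ * _).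
by apply: eq_bigr => w _; rewrite IH row_mxKr mxE.
Qed.

Lemma gnn_out_lp n (e : rel 'I_n) (X : 'M[R]_(n, d)) (Vtr : {set 'I_n})
    (lab : 'I_n -> Y) l v i :
  gnn_out lp_init lp_step lp_readout e X Vtr lab l v ord0 i =
  hitprob R e Vtr lab l.-1 v (enum_val i).
Proof. by rewrite /gnn_out hidden_lp /lp_readout row_mxKr mxE. Qed.

End LabelPropagationGNN.

Theorem theorem1 (R : realType) (d : nat) (Y : finType) :
  exists (m : nat)
    (f1 : 'rV[R]_(d + (1 + #|Y|)) -> seq 'rV[R]_(d + (1 + #|Y|)) -> 'rV[R]_m)
    (fagg : nat -> 'rV[R]_m -> seq 'rV[R]_m -> 'rV[R]_m)
    (fpred : 'rV[R]_m -> 'rV[R]_#|Y|),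
    perm_invariant f1 /\ (forall k, perm_invariant (fagg k)) /\
    forall (eps : R), 0 < eps ->
    forall (n : nat) (e : rel 'I_n) (X : 'M[R]_(n, d))
           (Vtr : {set 'I_n}) (lab : 'I_n -> Y) (v : 'I_n),
      simple_graph e -> connected_graph e ->
      (0 < #|Vtr|)%N -> v \notin Vtr ->
      exists L : nat, (0 < L)%N /\
        forall l : nat, (L <= l)%N ->
          \sum_(i < #|Y|)
             `|gnn_out f1 fagg fpred e X Vtr lab l v ord0 i
               - lp R e Vtr lab v (enum_val i)| <= eps.
Proof.
exists (1 + #|Y|)%N, (@lp_init R d Y), (@lp_step R Y), (@lp_readout R Y).
split; first exact: lp_init_perm_invariant.
split; first exact: lp_step_perm_invariant.
move=> eps eps_gt0 n e X Vtr lab v _ _ _ _.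
have cvg_err : \sum_(i < #|Y|) `|hitprob R e Vtr lab t v (enum_val i)
                                 - lp R e Vtr lab v (enum_val i)| @[t --> \oo] --> 0.
  by apply: cvg_sum_dist0 => i; exact: hitprob_cvg.
have [N _ err_le] := cvgr0_norm_le _ cvg_err _ eps_gt0.
exists N.+1; split => // l Nl.
rewrite (eq_bigr (fun i => `|hitprob R e Vtr lab l.-1 v (enum_val i)
                             - lp R e Vtr lab v (enum_val i)|)); last first.
  by move=> i _; rewrite gnn_out_lp.
apply: le_trans (ler_norm _) (err_le _ _).
by rewrite /= -ltnS (ltn_predK Nl).
Qed.
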